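(* Let $V$ be a real Hilbert space, $\mathcal D$ a dictionary, $V_n\subset V$ any subspace of dimension $n$ with orthonormal basis $(\phi_1,\dots,\phi_n)$, and $\kappa\in(0,1)$. If $(W_m)_{m\ge0}$ is generated by the collective OMP algorithm with parameter $\kappa$, then $\lim_{m\to\infty}r_m=0$.
   Context: A dictionary is a set $\mathcal D\subset V$ of elements with $\|\omega\|=1$ for all $\omega\in\mathcal D$ whose finite linear combinations are dense in $V$. Collective OMP: $W_0=\{0\}$; for $k\ge1$, choose $\omega_k\in\mathcal D$ with $$\sum_{i=1}^n|\langle\phi_i-P_{W_{k-1}}\phi_i,\omega_k\rangle|^2\ge\kappa^2\sup_{\omega\in\mathcal D}\sum_{i=1}^n|\langle\phi_i-P_{W_{k-1}}\phi_i,\omega\rangle|^2,$$ and set $W_k=\operatorname{span}\{\omega_1,\dots,\omega_k\}$ ($P_X$ is the orthogonal projection onto $X$). The residual is $r_m=\sum_{i=1}^n\|\phi_i-P_{W_m}\phi_i\|^2$. *)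

From HB Require Import structures.
From mathcomp Require Import all_boot all_order all_algebra.
From mathcomp Require Import all_classical all_reals all_analysis.
Set Implicit Arguments. Unset Strict Implicit. Unset Printing Implicit Defensive.
Import Order.TTheory GRing.Theory Num.Theory.
Import numFieldNormedType.Exports.
Local Open Scope classical_set_scope.
Local Open Scope ring_scope.

(* A real inner product compatible with the norm of V (V complete => Hilbert). *)
Definition is_inner_product (R : realType) (V : normedModType R)
  (ip : V -> V -> R) : Prop :=
  [/\ forall x y, ip x y = ip y x,
      forall a x y z, ip (a *: x + y) z = a * ip x z + ip y z &
      forall x, ip x x = `|x| ^+ 2].

Definition lin_span (R : realType) (V : normedModType R) (D : set V) : set V :=
  [set v | exists (k : nat) (c : nat -> R) (d : nat -> V),
     (forall j, (j < k)%N -> D (d j)) /\ v = \sum_(j < k) c j *: d j].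

Definition dictionary (R : realType) (V : normedModType R) (D : set V) : Prop :=
  (forall w, D w -> `|w| = 1) /\ closure (lin_span D) = setT.

(* W_m = span {w 0, ..., w (m-1)}  (w j stands for omega_(j+1)) *)
Definition spanW (R : realType) (V : normedModType R) (w : nat -> V) (m : nat)
  : set V :=
  [set v | exists c : nat -> R, v = \sum_(j < m) c j *: w j].

Definition is_orth_proj (R : realType) (V : normedModType R)
  (ip : V -> V -> R) (S : set V) (x p : V) : Prop :=
  S p /\ forall s, S s -> ip (x - p) s = 0.

(* The squared residual r_m = sum_i |phi_i - P_m phi_i|^2 can only decrease,
   and passing from W_m to W_(m+1) lowers it at least by the gain
   sum_i <phi_i - P_m phi_i, w_m>^2, which the weak greedy choice makes
   comparable (up to kappa^2) to the best gain over the dictionary.  Hence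
   the gains are summable and tend to 0, so every residual is eventually
   almost orthogonal to each dictionary element, to their linear span, and,
   the residuals being bounded, to all of V.  Since
   |phi_i - P_m phi_i|^2 = <phi_i - P_m phi_i, phi_i>, the residuals
   themselves tend to 0. *)
From HB Require Import structures.
From mathcomp Require Import all_boot all_order all_algebra.
From mathcomp Require Import all_classical all_reals all_analysis.
From mathcomp Require Import lra.
Import Order.TTheory GRing.Theory Num.Theory.
Import numFieldNormedType.Exports.
Local Open Scope classical_set_scope.
Local Open Scope ring_scope.

Set Implicit Arguments.
Unset Strict Implicit.
Unset Printing Implicit Defensive.

Lemma cvg_sum0 (R : realType) (k : nat) (f : 'I_k -> nat -> R) :
  (forall j, f j m @[m --> \oo] --> 0) -> \sum_(j < k) f j m @[m --> \oo] --> 0.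
Proof.
move=> f_cvg0.
rewrite -[X in _ --> X](big1 (index_enum 'I_k) xpredT (fun=> (0 : R)) (op := +%R)) //.
by apply: (cvg_big (P := xpredT) add_continuous).
Qed.

Lemma cvg0_of_sqr (R : realType) (u : R ^nat) :
  u m ^+ 2 @[m --> \oo] --> 0 -> u @ \oo --> 0.
Proof.
move=> /cvgr0Pnorm_le u2_cvg0; apply/cvgr0Pnorm_le => eps eps0.
apply: filterS (u2_cvg0 _ (exprn_gt0 2 eps0)) => m.
by rewrite normrX ler_sqr ?nnegrE // ltW.
Qed.

Lemma decrement_cvg0 (R : realType) (e g : R ^nat) :
  (forall m, 0 <= e m) -> (forall m, 0 <= g m) ->
  (forall m, e m.+1 + g m <= e m) -> g @ \oo --> 0.
Proof.
move=> e_ge0 g_ge0 e_step.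
have /cvg_ex[l e_cvg] : cvgn e.
  apply: nonincreasing_is_cvgn; last by exists 0 => _ [m _ <-].
  by apply/nonincreasing_seqP => m; have := e_step m; have := g_ge0 m; lra.
have de_cvg0 : e m - e m.+1 @[m --> \oo] --> 0.
  by rewrite -(subrr l); apply: cvgB => //; rewrite (cvg_shiftS e).
apply: (squeeze_cvgr _ (cvg_cst 0) de_cvg0).
by apply: nearW => m; have := e_step m; have := g_ge0 m; lra.
Qed.

Lemma spanW_S (R : realType) (V : normedModType R) (w : nat -> V) m v :
  spanW w m v -> spanW w m.+1 v.
Proof.
case=> c ->; exists (fun j => if j == m then 0 else c j).
rewrite big_ord_recr /= eqxx scale0r addr0; apply: eq_bigr => j _.
by rewrite (ltn_eqF (ltn_ord j)).
Qed.

Lemma spanW_last (R : realType) (V : normedModType R) (w : nat -> V) m :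
  spanW w m.+1 (w m).
Proof.
exists (fun j => (j == m)%:R).
rewrite big_ord_recr /= eqxx scale1r big1 ?add0r // => j _.
by rewrite (ltn_eqF (ltn_ord j)) scale0r.
Qed.

Section InnerProduct.
Variables (R : realType) (V : normedModType R) (ip : V -> V -> R).
Hypothesis ipP : is_inner_product ip.

Lemma ipC x y : ip x y = ip y x. Proof. by case: ipP. Qed.

Lemma ip_norm x : ip x x = `|x| ^+ 2. Proof. by case: ipP. Qed.

Lemma ipDl x y z : ip (x + y) z = ip x z + ip y z.
Proof. by case: ipP => _ ipDZl _; have := ipDZl 1 x y z; rewrite scale1r mul1r. Qed.

Lemma ipZl a x z : ip (a *: x) z = a * ip x z.
Proof.
case: ipP => _ ipDZl _.
have ip0l : ip 0 z = 0 by have := ipDZl 1 0 0 z; rewrite scale1r addr0 mul1r; lra.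
by rewrite -[a *: x]addr0 ipDZl ip0l addr0.
Qed.

Lemma ipBl x y z : ip (x - y) z = ip x z - ip y z.
Proof. by rewrite ipDl -scaleN1r ipZl mulN1r. Qed.

Lemma ipDr x y z : ip z (x + y) = ip z x + ip z y.
Proof. by rewrite ipC ipDl !(ipC z). Qed.

Lemma ipZr a x z : ip z (a *: x) = a * ip z x.
Proof. by rewrite ipC ipZl (ipC z). Qed.

Lemma ipBr x y z : ip z (x - y) = ip z x - ip z y.
Proof. by rewrite ipC ipBl !(ipC z). Qed.

Lemma ip0r z : ip z 0 = 0.
Proof. by rewrite -(subrr 0) ipBr subrr. Qed.

Lemma ip_sumr x k (f : 'I_k -> V) :
  ip x (\sum_(j < k) f j) = \sum_(j < k) ip x (f j).
Proof.
elim: k f => [|k IH] f; first by rewrite !big_ord0 ip0r.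
by rewrite !big_ord_recr /= ipDr IH.
Qed.

Lemma pythagoras u v : ip u v = 0 -> `|u + v| ^+ 2 = `|u| ^+ 2 + `|v| ^+ 2.
Proof. by move=> uv0; rewrite -!ip_norm ipDl !ipDr (ipC v u) uv0 addr0 add0r. Qed.

Lemma norm_sub_ipZ_unit x u : `|u| = 1 ->
  `|x - ip x u *: u| ^+ 2 = `|x| ^+ 2 - ip x u ^+ 2.
Proof.
move=> u1; rewrite -!ip_norm !ipBl !ipBr !ipZl !ipZr (ip_norm u) u1 expr1n (ipC u x).
set a := ip x u; set b := ip x x; rewrite expr2; lra.
Qed.

Lemma ip_unit_sqr_le x u : `|u| = 1 -> ip x u ^+ 2 <= `|x| ^+ 2.
Proof. by move=> u1; have := sqr_ge0 `|x - ip x u *: u|; rewrite norm_sub_ipZ_unit //; lra. Qed.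

Lemma ip_unit_norm_le x u : `|u| = 1 -> `|ip x u| <= `|x|.
Proof.
move=> /(ip_unit_sqr_le x).
by rewrite -[ip x u ^+ 2]ger0_norm ?sqr_ge0 // normrX ler_sqr ?nnegrE.
Qed.

Lemma ip_CauchySchwarz x y : `|ip x y| <= `|x| * `|y|.
Proof.
have [->|y0] := eqVneq y 0; first by rewrite ip0r !normr0 mulr0.
move: (ip_unit_norm_le x (normfZV y0)); rewrite ipZr normrM normfV normr_id.
by rewrite ler_pdivrMl ?normr_gt0 // mulrC.
Qed.

Lemma orth_proj_norm_sqr S x p :
  is_orth_proj ip S x p -> `|x - p| ^+ 2 = ip (x - p) x.
Proof. by case=> Sp orth; rewrite -ip_norm ipBr (orth p Sp) subr0. Qed.

Lemma orth_proj_norm_le S x p : is_orth_proj ip S x p -> `|x - p| <= `|x|.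
Proof.
case=> Sp orth; rewrite -ler_sqr ?nnegrE //.
by rewrite -[in leRHS](subrK p x) (pythagoras (orth p Sp)) lerDl sqr_ge0.
Qed.

(* [q] is compared with the competitor [y] of [W_(m+1)] obtained from [p] by
   one greedy step: [x - y] splits orthogonally into [x - q] and [q - y]. *)
Lemma orth_proj_step (w : nat -> V) m x p q : `|w m| = 1 ->
  is_orth_proj ip (spanW w m) x p -> is_orth_proj ip (spanW w m.+1) x q ->
  `|x - q| ^+ 2 + ip (x - p) (w m) ^+ 2 <= `|x - p| ^+ 2.
Proof.
move=> w1 [Sp _] [Sq orth_q].
pose y := p + ip (x - p) (w m) *: w m.
have orth_qy : ip (x - q) (q - y) = 0.
  rewrite ipBr ipDr ipZr (orth_q q Sq) (orth_q p (spanW_S Sp)).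
  by rewrite (orth_q _ (spanW_last w m)) mulr0 addr0 subrr.
have := norm_sub_ipZ_unit (x - p) w1.
have -> : x - p - ip (x - p) (w m) *: w m = (x - q) + (q - y).
  by rewrite addrA subrK opprD addrA.
by rewrite pythagoras //; have := sqr_ge0 `|q - y|; lra.
Qed.

Lemma ip_cvg0_lin_span (x : nat -> V) (D : set V) v :
  (forall d, D d -> ip (x m) d @[m --> \oo] --> 0) ->
  lin_span D v -> ip (x m) v @[m --> \oo] --> 0.
Proof.
move=> D_cvg0 [k [c [d [Dd ->]]]].
under eq_cvg do rewrite ip_sumr.
apply: cvg_sum0 => j; under eq_cvg do rewrite ipZr.
have := cvgMl_tmp (a := c j) (D_cvg0 _ (Dd _ (ltn_ord j))).
by rewrite mulr0; apply.
Qed.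

Lemma ip_cvg0_dense (x : nat -> V) (S : set V) (M : R) y :
  closure S = setT -> (forall m, `|x m| <= M) ->
  (forall v, S v -> ip (x m) v @[m --> \oo] --> 0) ->
  ip (x m) y @[m --> \oo] --> 0.
Proof.
move=> S_dense x_bnd S_cvg0; apply/cvgr0Pnorm_le => eps eps0.
have M1_gt0 : 0 < `|M| + 1 by rewrite ltr_wpDl.
pose d := eps / 2 / (`|M| + 1).
have [v Sv yv] : exists2 v, S v & `|y - v| < d.
  have : closure S y by rewrite S_dense.
  move=> /(_ _ (nbhsx_ballx y d _)) [|v [Sv]]; first by rewrite !divr_gt0.
  by rewrite -ball_normE; exists v.
near=> m.
have ip_v : `|ip (x m) v| <= eps / 2.
  by near: m; move/cvgr0Pnorm_le: (S_cvg0 v Sv); apply; rewrite divr_gt0.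
have ip_yv : `|ip (x m) (y - v)| <= eps / 2.
  apply: le_trans (ip_CauchySchwarz _ _) _.
  have -> : eps / 2 = (`|M| + 1) * d by rewrite /d mulrCA mulfV ?gt_eqF ?mulr1.
  apply: ler_pM => //; last exact: ltW.
  by apply: le_trans (x_bnd m) _; rewrite (le_trans (ler_norm M)) ?lerDl.
rewrite -(subrK v y) ipDr (le_trans (ler_normD _ _)) //.
by rewrite [leRHS]splitr lerD.
Unshelve. all: by end_near.
Qed.

End InnerProduct.

Section CollectiveOMP.
Variables (R : realType) (V : normedModType R) (ip : V -> V -> R) (D : set V)
  (n : nat) (phi : 'I_n -> V) (kappa : R) (w : nat -> V) (P : nat -> 'I_n -> V).
Hypotheses (ipP : is_inner_product ip) (D_unit : forall d, D d -> `|d| = 1)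
  (kappa_gt0 : 0 < kappa)
  (P_proj : forall m i, is_orth_proj ip (spanW w m) (phi i) (P m i))
  (w_greedy : forall k, D (w k) /\
     \sum_(i < n) (ip (phi i - P k i) (w k)) ^+ 2 >=
       kappa ^+ 2 * sup [set \sum_(i < n) (ip (phi i - P k i) om) ^+ 2
                         | om in D]).

Local Notation residual m := (\sum_(i < n) `|phi i - P m i| ^+ 2).
Local Notation gain m d := (\sum_(i < n) ip (phi i - P m i) d ^+ 2).

Lemma omp_residual_step m : residual m.+1 + gain m (w m) <= residual m.
Proof.
rewrite -big_split; apply: ler_sum => i _.
exact (orth_proj_step ipP (D_unit (w_greedy m).1) (P_proj m i) (P_proj m.+1 i)).
Qed.

Lemma omp_gain_cvg0 : gain m (w m) @[m --> \oo] --> 0.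
Proof.
apply: decrement_cvg0 omp_residual_step => m; apply: sumr_ge0 => i _; exact: sqr_ge0.
Qed.

Lemma omp_gain_dict_le m d : D d -> kappa ^+ 2 * gain m d <= gain m (w m).
Proof.
move=> Dd; apply: le_trans (w_greedy m).2; rewrite ler_pM2l ?exprn_gt0 //.
apply: ub_le_sup; last by exists d.
exists (residual m) => _ [om Dom <-]; apply: ler_sum => i _.
exact: (ip_unit_sqr_le ipP (phi i - P m i) (D_unit Dom)).
Qed.

Lemma omp_ip_dict_cvg0 i d : D d -> ip (phi i - P m i) d @[m --> \oo] --> 0.
Proof.
move=> Dd; apply: cvg0_of_sqr.
have : kappa ^- 2 * gain m (w m) @[m --> \oo] --> kappa ^- 2 * 0.
  exact: cvgMl_tmp omp_gain_cvg0.
rewrite mulr0 => bound_cvg0.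
apply: (squeeze_cvgr _ (cvg_cst 0) bound_cvg0); apply: nearW => m.
rewrite sqr_ge0 /= ler_pdivlMl ?exprn_gt0 //.
apply: le_trans (omp_gain_dict_le m Dd); rewrite ler_pM2l ?exprn_gt0 //.
by rewrite (bigD1 i) //= lerDl sumr_ge0 // => j _; exact: sqr_ge0.
Qed.

End CollectiveOMP.

Theorem mainTheorem10 (R : realType) (V : completeNormedModType R)
  (ip : V -> V -> R) (D : set V) (n : nat) (phi : 'I_n -> V) (kappa : R)
  (w : nat -> V) (P : nat -> 'I_n -> V) :
  is_inner_product ip ->
  dictionary D ->
  (forall i j, ip (phi i) (phi j) = (i == j)%:R) ->
  0 < kappa < 1 ->
  (forall m i, is_orth_proj ip (spanW w m) (phi i) (P m i)) ->
  (forall k, D (w k) /\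
     \sum_(i < n) (ip (phi i - P k i) (w k)) ^+ 2 >=
       kappa ^+ 2 * sup [set \sum_(i < n) (ip (phi i - P k i) om) ^+ 2
                         | om in D]) ->
  (fun m => \sum_(i < n) `|phi i - P m i| ^+ 2) @ \oo --> (0 : R).
Proof.
move=> ipP [D_unit D_dense] _ /andP[kappa_gt0 _] P_proj w_greedy.
under eq_cvg do under eq_bigr do rewrite (orth_proj_norm_sqr ipP (P_proj _ _)).
apply: cvg_sum0 => i.
apply: (ip_cvg0_dense ipP _ D_dense (fun m => orth_proj_norm_le ipP (P_proj m i))).
move=> v; apply: ip_cvg0_lin_span => // d Dd.
exact: (omp_ip_dict_cvg0 ipP D_unit kappa_gt0 P_proj w_greedy i Dd).
Qed.
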